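(* Let $F:\mathcal{P}(V,A)\to S_2(A)$ be a weakly viable consular election rule satisfying SPP and SPO. Then $F$ is unanimous: for every profile $P$ and $a\in A$, if $a$ is ranked first by every voter in $P$, then $a\in F(P)$.
   Context: $V$ is a finite nonempty set of voters, $A$ a finite set of alternatives; a profile $P$ assigns to each voter $i$ a linear order $P_i$ on $A$; $P_i'P_{-i}$ replaces voter $i$'s order by $P_i'$. $S_2(A)$ is the set of 2-element subsets of $A$; a consular election rule is a map $F:\mathcal{P}(V,A)\to S_2(A)$. SPO: for all $P$, $i$, $P_i'$, $\mathrm{best}(P_i,F(P))\succeq_i\mathrm{best}(P_i,F(P_i'P_{-i}))$; SPP: same with $\mathrm{worst}$, where $\mathrm{best}(P_i,W)$, $\mathrm{worst}(P_i,W)$ are the $P_i$-best and $P_i$-worst elements of $W$. Weakly viable: every $a\in A$ lies in $F(P)$ for some profile $P$. *)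

From mathcomp Require Import all_boot.
Set Implicit Arguments. Unset Strict Implicit. Unset Printing Implicit Defensive.

(* A (weak-reflexive) linear order on A: [r x y] means "x is ranked at least
   as high as y" (x ≽ y). *)
Definition is_linorder (A : finType) (r : rel A) : Prop :=
  [/\ reflexive r, antisymmetric r, transitive r & total r].

Definition linorder (A : finType) := {r : rel A | is_linorder r}.

Definition lo_rel (A : finType) (o : linorder A) : rel A := proj1_sig o.

Definition profile (V A : finType) := V -> linorder A.

Definition update (V A : finType) (P : profile V A) (i : V) (o : linorder A)
  : profile V A := fun j => if j == i then o else P j.

Definition is_pair (A : finType) (W : {set A}) : bool := #|W| == 2.

Definition consular_rule (V A : finType) :=
  {F : profile V A -> {set A} | forall P, is_pair (F P)}.

Definition cr_fun (V A : finType) (F : consular_rule V A) := proj1_sig F.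

Definition best (A : finType) (o : linorder A) (W : {set A}) (x : A) : Prop :=
  x \in W /\ forall y, y \in W -> lo_rel o x y.

Definition worst (A : finType) (o : linorder A) (W : {set A}) (x : A) : Prop :=
  x \in W /\ forall y, y \in W -> lo_rel o y x.

Definition SPO (V A : finType) (F : consular_rule V A) : Prop :=
  forall (P : profile V A) (i : V) (o : linorder A) (a b : A),
    best (P i) (cr_fun F P) a ->
    best (P i) (cr_fun F (update P i o)) b ->
    lo_rel (P i) a b.

Definition SPP (V A : finType) (F : consular_rule V A) : Prop :=
  forall (P : profile V A) (i : V) (o : linorder A) (a b : A),
    worst (P i) (cr_fun F P) a ->
    worst (P i) (cr_fun F (update P i o)) b ->
    lo_rel (P i) a b.

Definition weakly_viable (V A : finType) (F : consular_rule V A) : Prop :=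
  forall a : A, exists P : profile V A, a \in cr_fun F P.

Definition unanimous (V A : finType) (F : consular_rule V A) : Prop :=
  forall (P : profile V A) (a : A),
    (forall i : V, forall y : A, lo_rel (P i) a y) -> a \in cr_fun F P.

(* Start from a profile whose outcome contains a (weak
   viability) and let the voters switch to their orders in P one at a time.
   When a voter with a on top switches, the best element for him of the new
   outcome can be no better than a, which was available to him before the
   switch; since a is his top choice, that best element is a itself. *)

From mathcomp Require Import all_boot.
From Stdlib Require Import FunctionalExtensionality.

Set Implicit Arguments.
Unset Strict Implicit.
Unset Printing Implicit Defensive.

Section LinearOrders.

Variables (A : finType) (o : linorder A).

Lemma lo_refl : reflexive (lo_rel o).
Proof. by case: o => r []. Qed.

Lemma lo_antisym : antisymmetric (lo_rel o).
Proof. by case: o => r []. Qed.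

Lemma lo_trans : transitive (lo_rel o).
Proof. by case: o => r []. Qed.

Lemma lo_total : total (lo_rel o).
Proof. by case: o => r []. Qed.

Lemma best_in_seq (s : seq A) :
  s != [::] -> exists2 x, x \in s & forall y, y \in s -> lo_rel o x y.
Proof.
elim: s => // x [|x' s] IH _.
  by exists x => [|y]; rewrite ?mem_seq1 // => /eqP ->; apply: lo_refl.
have [m ms m_best] := IH isT.
case/orP: (lo_total x m) => [xm | mx].
- exists x => [|y]; first exact: mem_head.
  rewrite in_cons => /orP [/eqP -> | /m_best]; first exact: lo_refl.
  exact: lo_trans.
- exists m => [|y]; first by rewrite in_cons ms orbT.
  by rewrite in_cons => /orP [/eqP -> | /m_best].
Qed.

Lemma best_exists (W : {set A}) : W != set0 -> exists x, best o W x.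
Proof.
move=> /set0Pn [x0 x0W]; have [x xW x_best] : exists2 x, x \in enum W &
    forall y, y \in enum W -> lo_rel o x y.
  by apply: best_in_seq; apply/eqP => W_nil; move: x0W; rewrite -mem_enum W_nil.
exists x; split=> [|y yW]; first by rewrite -mem_enum.
by apply: x_best; rewrite mem_enum.
Qed.

End LinearOrders.

Lemma outcome_neq0 (V A : finType) (F : consular_rule V A) (P : profile V A) :
  cr_fun F P != set0.
Proof. by case: F => f f_pair /=; rewrite -card_gt0 (eqP (f_pair P)). Qed.

Section Updates.

Variables (V A : finType).
Implicit Types (P Q : profile V A) (o : linorder A).

Lemma update_eq P i o : update P i o i = o.
Proof. by rewrite /update eqxx. Qed.

Lemma update_undo P i o : update (update P i o) i (P i) = P.
Proof.
by apply: functional_extensionality => j; rewrite /update; case: eqP => // ->.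
Qed.

Definition mix P Q (s : seq V) : profile V A :=
  fun j => if j \in s then P j else Q j.

Lemma mix_cons P Q x s : mix P Q (x :: s) = update (mix P Q s) x (P x).
Proof.
by apply: functional_extensionality => j; rewrite /mix /update inE; case: eqP => [->|].
Qed.

Lemma mix_enum P Q : mix P Q (enum V) = P.
Proof. by apply: functional_extensionality => j; rewrite /mix mem_enum. Qed.

End Updates.

Section StrategyProofOptimists.

Variables (V A : finType) (F : consular_rule V A).
Hypothesis F_SPO : SPO F.

Lemma SPO_top_stays (R : profile V A) (i : V) (o : linorder A) (a : A) :
  (forall y, lo_rel o a y) -> a \in cr_fun F R -> a \in cr_fun F (update R i o).
Proof.
move=> a_top aR; have [b b_best] := best_exists o (outcome_neq0 F (update R i o)).
have a_best : best o (cr_fun F R) a by [].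
have ba : lo_rel o b a.
  by have := @F_SPO (update R i o) i (R i) b a; rewrite update_undo update_eq; apply.
have <- : b = a by apply: (@lo_antisym _ o); rewrite ba a_top.
by case: b_best.
Qed.

Lemma SPO_unanimous_from (P Q : profile V A) (a : A) :
  (forall i y, lo_rel (P i) a y) -> a \in cr_fun F Q -> a \in cr_fun F P.
Proof.
move=> a_top aQ; rewrite -(mix_enum P Q).
elim: (enum V) => [|x s IH]; first by [].
by rewrite mix_cons; apply: SPO_top_stays.
Qed.

End StrategyProofOptimists.

Theorem corollary11 (V A : finType) (v0 : V) (F : consular_rule V A) :
  weakly_viable F -> SPP F -> SPO F -> unanimous F.
Proof.
move=> F_viable _ F_SPO P a a_top.
have [Q aQ] := F_viable a.
exact: SPO_unanimous_from aQ.
Qed.
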